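(* Let $X$ be a complex Banach space with open unit ball $B$, let $H(B)$ be a uniform algebra with $A_u(B)\subseteq H(B)\subseteq H^\infty(B)$, and let $x^{**}\in\bar B^{**}$. Then $Cl_B(f,x^{**})=\hat f(M_{x^{**}})$ for all $f\in H(B)$ if and only if the following holds: for every finite family $f_1,\dots,f_{n-1}\in A(B)$ and $f_n\in H(B)$ for which there is $\delta>0$ with $|f_1(x)|+\dots+|f_n(x)|\ge\delta$ for all $x\in B$, the functions $\hat f_1,\dots,\hat f_n$ have no common zero in $M_{x^{**}}$.
   Context: $H^\infty(B)$: bounded holomorphic functions on $B$ with sup norm; $A(B)$: closed subalgebra of $H^\infty(B)$ generated by $1$ and the restrictions to $B$ of $X^*$; $A_u(B)$: uniformly continuous holomorphic functions on $B$; a uniform algebra between $A_u(B)$ and $H^\infty(B)$ is a closed unital subalgebra of $H^\infty(B)$ containing $A_u(B)$. $M_{H(B)}$ is its spectrum, $\hat f$ the Gelfand transform. $\bar B^{**}$ is the closed unit ball of $X^{**}$. Cluster set: $Cl_B(f,x^{**})=\{\lambda:\exists\text{ net }(x_\alpha)\subset B,\ x_\alpha\to x^{**}\text{ weak-star},\ f(x_\alpha)\to\lambda\}$. Fiber: $M_{x^{**}}=\{\tau\in M_{H(B)}:\tau(L)=x^{**}(L)\ \forall L\in X^*\}$. *)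

From HB Require Import structures.
From mathcomp Require Import all_boot all_order all_algebra.
From mathcomp Require Import complex.
From mathcomp Require Import all_classical all_reals all_analysis.
Set Implicit Arguments. Unset Strict Implicit. Unset Printing Implicit Defensive.
Import Order.TTheory GRing.Theory Num.Theory.
Import numFieldTopology.Exports numFieldNormedType.Exports.
Local Open Scope ring_scope.
Local Open Scope complex_scope.

Section Defs.
Variables (R : realType).
Local Notation C := (R[i]).
Variable (X : completeNormedModType C).

Definition ball1 := {x : X | `|x| < 1}.

Definition is_dual (L : X -> C) : Prop :=
  (forall (a : C) (x y : X), L (a *: x + y) = a * L x + L y) /\ continuous (L : X -> C^o).

(** elements of the closed unit ball of X^** : C-linear functionals on X^*
    of norm <= 1 (only their values on X^* matter) *)
Definition in_bidual_ball (xss : (X -> C) -> C) : Prop :=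
  (forall (a : C) (L1 L2 : X -> C), is_dual L1 -> is_dual L2 ->
      xss (fun x => a * L1 x + L2 x) = a * xss L1 + xss L2) /\
  (forall (L : X -> C) (c : C), is_dual L -> 0 <= c ->
      (forall x, `|L x| <= c * `|x|) -> `|xss L| <= c).

Definition holomorphic (f : ball1 -> C) : Prop :=
  forall b : ball1, exists L : X -> C, is_dual L /\
    forall eps : C, 0 < eps -> exists2 delta : C, 0 < delta &
      forall b' : ball1, `|val b' - val b| < delta ->
        `|f b' - f b - L (val b' - val b)| <= eps * `|val b' - val b|.

Definition Hinf (f : ball1 -> C) : Prop :=
  holomorphic f /\ exists M : C, forall b, `|f b| <= M.

Definition Au (f : ball1 -> C) : Prop :=
  holomorphic f /\
  forall eps : C, 0 < eps -> exists2 delta : C, 0 < delta &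
    forall b b' : ball1, `|val b - val b'| < delta -> `|f b - f b'| < eps.

Inductive polyX : (ball1 -> C) -> Prop :=
  | polyX_cst (c : C) : polyX (fun _ => c)
  | polyX_dual (L : X -> C) : is_dual L -> polyX (fun b => L (val b))
  | polyX_add f g : polyX f -> polyX g -> polyX (fun b => f b + g b)
  | polyX_mul f g : polyX f -> polyX g -> polyX (fun b => f b * g b).

Definition AB (f : ball1 -> C) : Prop :=
  forall eps : C, 0 < eps -> exists2 p, polyX p & forall b, `|f b - p b| <= eps.

Definition uniform_algebra_between (H : (ball1 -> C) -> Prop) : Prop :=
  (forall f, H f -> Hinf f) /\ (forall f, Au f -> H f) /\
  H (fun _ => 1) /\
  (forall (a : C) f g, H f -> H g -> H (fun b => a * f b + g b)) /\
  (forall f g, H f -> H g -> H (fun b => f b * g b)) /\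
  (forall f, (forall eps : C, 0 < eps -> exists2 g, H g &
                 forall b, `|f b - g b| <= eps) -> H f).

(** spectrum M_{H(B)}: nonzero multiplicative C-linear functionals on H(B);
    the Gelfand transform of f is tau |-> tau f *)
Definition spectrum (H : (ball1 -> C) -> Prop) (tau : (ball1 -> C) -> C) : Prop :=
  (forall (a : C) f g, H f -> H g -> tau (fun b => a * f b + g b) = a * tau f + tau g) /\
  (forall f g, H f -> H g -> tau (fun b => f b * g b) = tau f * tau g) /\
  (exists2 f, H f & tau f != 0).

Definition fiber (H : (ball1 -> C) -> Prop) (xss : (X -> C) -> C)
    (tau : (ball1 -> C) -> C) : Prop :=
  spectrum H tau /\ forall L, is_dual L -> tau (fun b => L (val b)) = xss L.

Definition directed (I : Type) (le : I -> I -> Prop) : Prop :=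
  (exists i : I, True) /\ (forall i, le i i) /\
  (forall i j k, le i j -> le j k -> le i k) /\
  (forall i j, exists k, le i k /\ le j k).

Definition net_cvg (I : Type) (le : I -> I -> Prop) (u : I -> C) (l : C) : Prop :=
  forall eps : C, 0 < eps -> exists i0, forall i, le i0 i -> `|u i - l| < eps.

Definition cluster_set (f : ball1 -> C) (xss : (X -> C) -> C) (lam : C) : Prop :=
  exists (I : Type) (le : I -> I -> Prop) (x : I -> ball1),
    directed le /\
    (forall L, is_dual L -> net_cvg le (fun i => L (val (x i))) (xss L)) /\
    net_cvg le (fun i => f (x i)) lam.

End Defs.

From Pilot Require Import Defs.
From HB Require Import structures.
From mathcomp Require Import all_boot all_order all_algebra.
From mathcomp Require Import complex.
From mathcomp Require Import all_classical all_reals all_analysis.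
From mathcomp Require Import ring.
Import Order.TTheory GRing.Theory Num.Theory.
Import numFieldTopology.Exports numFieldNormedType.Exports.
Set Implicit Arguments. Unset Strict Implicit. Unset Printing Implicit Defensive.
Local Open Scope classical_set_scope.
Local Open Scope ring_scope.
Local Open Scope complex_scope.

(** Nets converging weak-star to x** are replaced by proper filters on B.

    (=>) If tau in M_x** kills f_1, ..., f_n, then 0 is a cluster value of f_n
    at x**, so f_n -> 0 along a filter converging weak-star to x**.  Every
    value of tau is a cluster value, so |tau g| <= sup |g|: tau is continuous
    for the sup norm, and since f_j (j < n) is a uniform limit of polynomials
    in X^*, also f_j -> tau f_j = 0.  Then sum |f_j| -> 0, contradicting delta.

    (<=) A cluster value is a limit along an ultrafilter refining the filter;
    bounded functions converge along ultrafilters, and the limit map is a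
    character in the fiber.  Conversely, for tau in the fiber with tau f = lam,
    the corona condition applied to L_j - x**(L_j) (finitely many L_j in X^* )
    and to f - lam shows that every set where these are all smaller than eps is
    nonempty; these sets form a filter base along which f -> lam and
    L -> x**(L) for every L. *)

(* mathcomp-analysis equips abstract numFieldTypes with their norm topology but
   not the concrete type [R[i]]. *)
HB.instance Definition _ (R : realType) := NormedModule.copy R[i] (R[i])^o.

Section ComplexLimits.
Variable R : realType.

Lemma cvg_norm_le (T : Type) (F : set_system T) (u : T -> R[i]) (l M : R[i]) :
  ProperFilter F -> u @ F --> l -> (forall t, `|u t| <= M) -> `|l| <= M.
Proof.
move=> PF /cvgrPdist_lt ul uM.
have [t0 _] := filter_ex (@filterT _ F _).
have M_real : M \is Num.real by apply: ger0_real; exact: le_trans (uM t0).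
rewrite real_leNgt ?normr_real //; apply/negP => Ml.
have lM0 : 0 < `|l| - M by rewrite subr_gt0.
have [t lt] := filter_ex (ul _ lM0).
have := ler_distD (u t) l 0; rewrite !subr0 => /le_lt_trans/(_ (ltr_leD lt (uM t))).
by rewrite subrK ltxx.
Qed.

Lemma ultra_bounded_cvgR (T : Type) (U : set_system T) (r : T -> R) (M : R) :
  UltraFilter U -> (forall t, `|r t| <= M) -> exists a : R, r @ U --> a.
Proof.
move=> UU rM; have PU := ultra_proper (UltraFilter := UU).
have [|a [_ a_cluster]] := @segment_compact R (- M) M (r @ U) _.
  by change (U (r @^-1` `[- M, M])); apply: filterE => t; rewrite /= in_itv /= -ler_norml.
exists a => A /= Aa.
have [//|UnA] := in_ultra_setVsetC (r @^-1` A) UU.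
by have [t [/= + At]] := a_cluster (~` A) A UnA Aa.
Qed.

Lemma normc_ge_ReIm (z : R[i]) :
  `|complex.Re z|%:C <= `|z| /\ `|complex.Im z|%:C <= `|z|.
Proof.
split; first exact: normc_ge_Re.
by have := normc_ge_Re (z * 'i); rewrite ReiNIm normrN normrM normCi mulr1.
Qed.

Lemma normc_le_ReIm (z : R[i]) :
  `|z| <= (`|complex.Re z| + `|complex.Im z|)%:C.
Proof.
rewrite {1}(complexE z) rmorphD; apply: (le_trans (ler_normD _ _)).
by rewrite normrM !normc_def /= !expr0n /= !addr0 expr1n add0r sqrtr1 mul1r !sqrtr_sqr.
Qed.

Lemma cvg_ReIm (T : Type) (F : set_system T) (u : T -> R[i]) (a b : R) :
  Filter F -> (fun t => complex.Re (u t)) @ F --> a ->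
  (fun t => complex.Im (u t)) @ F --> b ->
  u @ F --> a +i* b.
Proof.
move=> FF /cvgrPdist_lt Reu /cvgrPdist_lt Imu; apply/cvgrPdist_lt.
move=> [e e'] /[!ltcE] /= /andP[/eqP -> e0]; have e20 : 0 < e / 2 by rewrite divr_gt0.
apply: filterS (filterI (Reu _ e20) (Imu _ e20)) => t /=.
case: (u t) => x y /= [xa yb]; apply: le_lt_trans (normc_le_ReIm _) _.
by rewrite ltcR (splitr e) ltrD.
Qed.

Lemma ultra_bounded_cvg (T : Type) (U : set_system T) (u : T -> R[i]) (M : R[i]) :
  UltraFilter U -> (forall t, `|u t| <= M) -> exists l : R[i], u @ U --> l.
Proof.
move=> UU uM; have PU := ultra_proper (UltraFilter := UU).
have ReIm_le t : `|complex.Re (u t)| <= complex.Re M /\ `|complex.Im (u t)| <= complex.Re M.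
  have [+ +] := normc_ge_ReIm (u t); move=> /le_trans/(_ (uM t)) + /le_trans/(_ (uM t)).
  by rewrite !lecE /= => /andP[_ ->] /andP[_ ->].
have [a Rea] := ultra_bounded_cvgR UU (fun t => (ReIm_le t).1).
have [b Imb] := ultra_bounded_cvgR UU (fun t => (ReIm_le t).2).
by exists (a +i* b); exact: cvg_ReIm.
Qed.

End ComplexLimits.

Section Nets.
Variable R : realType.

Definition tail_filter (I : Type) (le : I -> I -> Prop) : set_system I :=
  filter_from setT (fun i => [set j | le i j]).

Lemma tail_filter_proper (I : Type) (le : I -> I -> Prop) :
  directed le -> ProperFilter (tail_filter le).
Proof.
move=> [[i0 _] [refl_le [trans_le ub_le]]].
apply: filter_from_proper => [|i _]; last by exists i; exact: refl_le.
apply: filter_from_filter => [|i j _ _]; first by exists i0.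
have [k [ik jk]] := ub_le i j.
by exists k => // l kl; split; exact: trans_le kl.
Qed.

Lemma net_cvgE (I : Type) (le : I -> I -> Prop) (u : I -> R[i]) (l : R[i]) :
  directed le -> net_cvg le u l <-> u @ tail_filter le --> l.
Proof.
move=> /tail_filter_proper PF; split => [ul|/cvgrPdist_lt ul e e0].
  apply/cvgrPdist_lt => e e0; have [i0 i0P] := ul e e0.
  by exists i0 => // i /i0P; rewrite distrC.
have [i0 _ i0P] := ul e e0.
by exists i0 => i /i0P; rewrite /= distrC.
Qed.

Section PointedSets.
Variables (T : Type) (F : set_system T).
Hypothesis PF : ProperFilter F.

Definition pointed_set := {p : set T * T | F p.1 /\ p.1 p.2}.

Definition pointed_le (p q : pointed_set) := (sval q).1 `<=` (sval p).1.

Lemma pointed_le_directed : directed pointed_le.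
Proof.
have point A : F A -> exists p : pointed_set, (sval p).1 = A.
  by move=> FA; have [a Aa] := filter_ex FA; exists (exist _ (A, a) (conj FA Aa)).
split; first by have [p _] := point _ filterT; exists p.
split; first by move=> p b.
split; first by move=> p q r pq qr; exact: subset_trans qr pq.
move=> p q; have [r rE] := point _ (filterI (proj1 (svalP p)) (proj1 (svalP q))).
by exists r; rewrite /pointed_le rE; split => b [].
Qed.

Lemma pointed_net_cvg (u : T -> R[i]) (l : R[i]) :
  u @ F --> l -> net_cvg pointed_le (fun p : pointed_set => u (sval p).2) l.
Proof.
move=> /cvgrPdist_lt ul e e0; have Fe := ul e e0; have [a ea] := filter_ex Fe.
exists (exist _ (_, a) (conj Fe ea)) => q qp.
by rewrite distrC; apply: qp; exact: (proj2 (svalP q)).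
Qed.

End PointedSets.
End Nets.

Section DualFunctionals.
Variables (R : realType) (X : completeNormedModType R[i]) (L : X -> R[i]).
Hypothesis dL : is_dual L.

Lemma dualB x y : L (x - y) = L x - L y.
Proof. by case: dL => lin _; rewrite -scaleN1r addrC lin mulN1r addrC. Qed.

Lemma dual0 : L 0 = 0.
Proof. by rewrite -(subrr (0 : X)) dualB subrr. Qed.

Lemma Au_dual : Au (fun b : ball1 X => L (val b)).
Proof.
split=> [b|e e0].
  exists L; split => // e e0; exists 1 => // b' _.
  by rewrite -dualB subrr normr0 mulr_ge0 ?normr_ge0 ?ltW.
case: dL => _ /(_ 0) /cvgrPdist_lt /(_ e e0); rewrite dual0.
move=> /nbhs_normP[d /= d0 Ld]; exists d => // b b' bb'.
by rewrite -dualB; have := Ld (val b - val b'); rewrite /ball_ /= !sub0r !normrN; apply.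
Qed.

End DualFunctionals.

Lemma Au_cst (R : realType) (X : completeNormedModType R[i]) (c : R[i]) :
  Au (fun _ : ball1 X => c).
Proof.
split=> [b|e e0]; last by exists 1 => // b b' _; rewrite subrr normr0.
exists (fun _ => 0); split.
  by split=> [a x y|x]; [rewrite mulr0 addr0 | exact: cvg_cst].
by move=> e e0; exists 1 => // b' _; rewrite subrr subr0 normr0 mulr_ge0 ?normr_ge0 ?ltW.
Qed.

Lemma AB_polyX (R : realType) (X : completeNormedModType R[i]) (p : ball1 X -> R[i]) :
  Defs.polyX p -> AB p.
Proof. by move=> Pp e e0; exists p => // b; rewrite subrr normr0 ltW. Qed.

Section UniformAlgebra.
Variables (R : realType) (X : completeNormedModType R[i]).
Local Notation B := (ball1 X).
Variable H : (B -> R[i]) -> Prop.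
Hypothesis UA : uniform_algebra_between H.

Lemma H_Hinf f : H f -> Hinf f.
Proof. by case: UA => + _; apply. Qed.

Lemma H_Au f : Au f -> H f.
Proof. by case: UA => _ [+ _]; apply. Qed.

Lemma H_lin a f g : H f -> H g -> H (fun b => a * f b + g b).
Proof. by case: UA => _ [_ [_ [+ _]]]; apply. Qed.

Lemma H_mul f g : H f -> H g -> H (fun b => f b * g b).
Proof. by case: UA => _ [_ [_ [_ [+ _]]]]; apply. Qed.

Lemma H_closed f :
  (forall e : R[i], 0 < e -> exists2 g, H g & forall b, `|f b - g b| <= e) -> H f.
Proof. by case: UA => _ [_ [_ [_ [_ +]]]]; apply. Qed.

Lemma H_cst c : H (fun _ => c).
Proof. exact/H_Au/Au_cst. Qed.

Lemma H_dual L : is_dual L -> H (fun b : B => L (val b)).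
Proof. by move=> dL; exact/H_Au/Au_dual. Qed.

Lemma H_add f g : H f -> H g -> H (fun b => f b + g b).
Proof.
suff -> : (fun b => f b + g b) = (fun b => 1 * f b + g b) by exact: H_lin.
by apply/funext => b; rewrite mul1r.
Qed.

Lemma H_sub f g : H f -> H g -> H (fun b => f b - g b).
Proof.
suff -> : (fun b => f b - g b) = (fun b => -1 * g b + f b) by move=> *; exact: H_lin.
by apply/funext => b; rewrite mulN1r addrC.
Qed.

Lemma H_polyX p : Defs.polyX p -> H p.
Proof. by elim=> *; [exact: H_cst | exact: H_dual | exact: H_add | exact: H_mul]. Qed.

Lemma H_AB f : AB f -> H f.
Proof. by move=> ABf; apply: H_closed => e /ABf[p /H_polyX]; exists p. Qed.

Section Characters.
Variable tau : (B -> R[i]) -> R[i].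
Hypothesis tau_spec : spectrum H tau.

Lemma tau_lin a f g : H f -> H g -> tau (fun b => a * f b + g b) = a * tau f + tau g.
Proof. by case: tau_spec => + _; apply. Qed.

Lemma tau_mul f g : H f -> H g -> tau (fun b => f b * g b) = tau f * tau g.
Proof. by case: tau_spec => _ [+ _]; apply. Qed.

Lemma tau_add f g : H f -> H g -> tau (fun b => f b + g b) = tau f + tau g.
Proof.
move=> Hf Hg; rewrite -[tau f]mul1r -tau_lin //.
by congr tau; apply/funext => b; rewrite mul1r.
Qed.

Lemma tau_sub f g : H f -> H g -> tau (fun b => f b - g b) = tau f - tau g.
Proof.
move=> Hf Hg; rewrite [RHS]addrC -mulN1r -tau_lin //.
by congr tau; apply/funext => b; rewrite mulN1r addrC.
Qed.

Lemma tau1 : tau (fun _ => 1) = 1.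
Proof.
case: tau_spec => _ [_ [f Hf /mulfI]]; apply; have H1 := H_cst 1.
by rewrite mulr1 -tau_mul //; congr tau; apply/funext => b; rewrite mulr1.
Qed.

Lemma tau_cst c : tau (fun _ => c) = c.
Proof. by have := tau_lin (c - 1) (H_cst 1) (H_cst 1); rewrite tau1 !mulr1 !subrK. Qed.

End Characters.
End UniformAlgebra.

Section Fibers.
Variables (R : realType) (X : completeNormedModType R[i]).
Local Notation B := (ball1 X).
Variable H : (B -> R[i]) -> Prop.
Hypothesis UA : uniform_algebra_between H.
Variable xss : (X -> R[i]) -> R[i].

Definition weak_star_cvg (F : set_system B) :=
  forall L, is_dual L -> (fun b : B => L (val b)) @ F --> xss L.

Lemma cluster_setP f lam :
  cluster_set f xss lam <->
  exists F, [/\ ProperFilter F, weak_star_cvg F & f @ F --> lam].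
Proof.
split=> [[I [le [x [dle [xL xf]]]]]|[F [PF wF fF]]].
  have PF := tail_filter_proper dle.
  exists (x @ tail_filter le); split; first exact: fmap_proper_filter.
    by move=> L dL A /((net_cvgE _ _ dle).1 (xL L dL)).
  by move=> A /((net_cvgE _ _ dle).1 xf).
exists (pointed_set F), (@pointed_le _ F), (fun p => (sval p).2).
split; first exact: pointed_le_directed.
by split=> [L dL|];
  [exact: (pointed_net_cvg (R := R) PF (wF L dL)) | exact: (pointed_net_cvg (R := R) PF fF)].
Qed.

Lemma fiber_polyX_cvg (F : set_system B) tau : Filter F ->
  fiber H xss tau -> weak_star_cvg F ->
  forall p, Defs.polyX p -> p @ F --> tau p.
Proof.
move=> FF [tau_spec tau_dual] wF p; elim=> [c|L dL|f g Pf fF Pg gF|f g Pf fF Pg gF].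
- by rewrite (tau_cst UA tau_spec); exact: cvg_cst.
- by rewrite tau_dual //; exact: wF.
- by rewrite (tau_add tau_spec (H_polyX UA Pf) (H_polyX UA Pg)); exact: cvgD fF gF.
- by rewrite (tau_mul tau_spec (H_polyX UA Pf) (H_polyX UA Pg)); exact: cvgM fF gF.
Qed.

Definition contractive (tau : (B -> R[i]) -> R[i]) :=
  forall g M, H g -> (forall b, `|g b| <= M) -> `|tau g| <= M.

Lemma fiber_AB_cvg (F : set_system B) tau : Filter F ->
  fiber H xss tau -> contractive tau -> weak_star_cvg F ->
  forall g, AB g -> g @ F --> tau g.
Proof.
move=> FF Ftau tau_le wF g ABg; apply/cvgrPdist_lt => e e0.
have e30 : 0 < e / 3 by rewrite divr_gt0.
have [p Pp gp] := ABg _ e30.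
have taugp : `|tau g - tau p| <= e / 3.
  rewrite -(tau_sub Ftau.1 (H_AB UA ABg) (H_polyX UA Pp)).
  exact: tau_le (H_sub UA (H_AB UA ABg) (H_polyX UA Pp)) gp.
apply: filterS ((cvgrPdist_lt _ _).1 (fiber_polyX_cvg FF Ftau wF Pp) _ e30) => b pb.
apply: le_lt_trans (ler_distD (tau p) _ _) _.
apply: le_lt_trans (lerD (lexx _) (ler_distD (p b) _ _)) _.
have -> : e = e / 3 + (e / 3 + e / 3) by field.
by apply: ler_ltD taugp (ltr_leD pb _); rewrite distrC.
Qed.

Lemma cluster_contractive tau :
  (forall g, H g -> cluster_set g xss (tau g)) -> contractive tau.
Proof.
move=> tau_cluster g M Hg gM.
have [F [PF _ gF]] := (cluster_setP g (tau g)).1 (tau_cluster g Hg).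
exact: cvg_norm_le gF gM.
Qed.

Definition cluster_eq_fiber_image :=
  forall f, H f -> forall lam : R[i],
    cluster_set f xss lam <-> exists2 tau, fiber H xss tau & tau f = lam.

Definition corona_fiber_condition :=
  forall (n : nat) (fs : 'I_n -> B -> R[i]) (fn : B -> R[i]),
    (forall i, AB (fs i)) -> H fn ->
    (exists2 delta : R[i], 0 < delta &
       forall b, delta <= \sum_(i < n) `|fs i b| + `|fn b|) ->
    ~ exists2 tau, fiber H xss tau & (forall i, tau (fs i) = 0) /\ tau fn = 0.

Lemma corona_of_cluster_eq : cluster_eq_fiber_image -> corona_fiber_condition.
Proof.
move=> clE n fs fn ABfs Hfn [d d0 d_le] [tau Ftau [fs0 fn0]].
have tau_cluster g : H g -> cluster_set g xss (tau g).
  by move=> Hg; apply/clE => //; exists tau.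
have [F [PF wF fnF]] := (cluster_setP _ _).1 (tau_cluster _ Hfn).
rewrite fn0 in fnF.
have fsF j : fs j @ F --> 0.
  rewrite -(fs0 j); apply: fiber_AB_cvg Ftau _ wF _ (ABfs j).
  exact: cluster_contractive tau_cluster.
have sumF : (fun b => \sum_(j < n) `|fs j b| + `|fn b|) @ F -->
    \sum_(j < n) `|0 : R[i]| + `|0 : R[i]|.
  apply: cvgD; last exact: cvg_norm.
  by apply: cvg_big => [|j _]; [exact: add_continuous | exact: cvg_norm].
rewrite normr0 big1_eq addr0 in sumF.
have [b /=] := filter_ex ((cvgrPdist_lt _ _).1 sumF d d0).
rewrite sub0r normrN ger0_norm ?addr_ge0 ?sumr_ge0 // => sum_lt.
by have := le_lt_trans (d_le b) sum_lt; rewrite ltxx.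
Qed.

Lemma ultra_fiber (U : set_system B) : UltraFilter U -> weak_star_cvg U ->
  exists2 tau, fiber H xss tau & forall g, H g -> g @ U --> tau g.
Proof.
move=> UU wU; have PU := ultra_proper (UltraFilter := UU).
have limE (g : B -> R[i]) l : g @ U --> l -> lim (g @ U) = l by exact: cvg_lim.
have gU g : H g -> g @ U --> lim (g @ U).
  move=> /(H_Hinf UA)[_ [M gM]]; have [l gl] := ultra_bounded_cvg UU gM.
  by rewrite (limE _ _ gl).
exists (fun g => lim (g @ U)) => //; split; last by move=> L dL; exact: limE (wU L dL).
split=> [a f g Hf Hg|].
  by apply: limE; exact: cvgD (cvgM (cvg_cst a) (gU f Hf)) (gU g Hg).
split=> [f g Hf Hg|]; first by apply: limE; exact: cvgM (gU f Hf) (gU g Hg).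
exists (fun _ => 1); first exact: (H_cst UA 1).
by rewrite (limE _ 1); [exact: oner_neq0 | exact: cvg_cst].
Qed.

Lemma cluster_set_fiber f lam : H f ->
  cluster_set f xss lam -> exists2 tau, fiber H xss tau & tau f = lam.
Proof.
move=> Hf /cluster_setP[F [PF wF fF]].
have [U [UU FU]] := ultraFilterLemma PF; have PU := ultra_proper (UltraFilter := UU).
have [tau Ftau tauU] : exists2 tau, fiber H xss tau & forall g, H g -> g @ U --> tau g.
  by apply: (ultra_fiber UU) => L dL A /(wF L dL); exact: FU.
have fU : f @ U --> lam by move=> A /fF; exact: FU.
exists tau => //.
have C_hausdorff : hausdorff_space R[i] := @norm_hausdorff _ _.
by rewrite -(cvg_lim C_hausdorff (tauU f Hf)) (cvg_lim C_hausdorff fU).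
Qed.

Definition near_xss_index (i : seq (X -> R[i]) * R[i]) :=
  0 < i.2 /\ {in i.1, forall L, is_dual L}.

Definition near_xss (f : B -> R[i]) lam (i : seq (X -> R[i]) * R[i]) : set B :=
  [set b | (forall L, L \in i.1 -> `|xss L - L (val b)| < i.2) /\ `|lam - f b| < i.2].

Lemma near_xss_filter f lam : Filter (filter_from near_xss_index (near_xss f lam)).
Proof.
apply: filter_from_filter => [|[s e] [t e'] [/= e0 s_dual] [/= e'0 t_dual]].
  by exists ([::], 1); split.
have ee' : e >=< e' := real_comparable (gtr0_real e0) (gtr0_real e'0).
have /andP[me me'] : (Order.min e e' <= e) && (Order.min e e' <= e').
  by rewrite -comparable_le_min.
exists (s ++ t, Order.min e e').
  split=> /=; first by rewrite comparable_lt_min ?e0.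
  by move=> L; rewrite mem_cat => /orP[/s_dual|/t_dual].
move=> b [/= near_b fb]; split; split=> /= [L Lin|].
- by apply: lt_le_trans me; apply: near_b; rewrite mem_cat Lin.
- exact: lt_le_trans fb me.
- by apply: lt_le_trans me'; apply: near_b; rewrite mem_cat Lin orbT.
- exact: lt_le_trans fb me'.
Qed.

Lemma near_xss_nonempty f lam tau : corona_fiber_condition -> H f ->
  fiber H xss tau -> tau f = lam -> forall i, near_xss_index i -> near_xss f lam i !=set0.
Proof.
move=> corona Hf [tau_spec tau_dual] tau_f [s e] [/= e0 s_dual].
apply: contrapT => no_b.
pose Ls (j : 'I_(size s)) : X -> R[i] := nth (fun _ => 0) s j.
have Ls_dual j : is_dual (Ls j) by apply: s_dual; exact: mem_nth.
apply: (corona (size s) (fun j b => Ls j (val b) - xss (Ls j)) (fun b => f b - lam)).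
- move=> j; apply: AB_polyX.
  exact: polyX_add (polyX_dual (Ls_dual j)) (polyX_cst _ _).
- exact (H_sub UA Hf (H_cst UA lam)).
- exists e => // b.
  rewrite real_leNgt ?(gtr0_real e0) ?ger0_real ?addr_ge0 ?sumr_ge0 //.
  apply/negP => sum_lt; apply: no_b; exists b; split => [L Lin|]; last first.
    by rewrite distrC; apply: le_lt_trans sum_lt; rewrite lerDr sumr_ge0.
  have L_idx : (index L s < size s)%N by rewrite index_mem.
  pose j := Ordinal L_idx.
  have Lj : Ls j = L by exact: nth_index.
  rewrite -Lj distrC; apply: le_lt_trans sum_lt.
  by rewrite (bigD1 j) //= -addrA lerDl addr_ge0 ?sumr_ge0.
- exists tau; first by split.
  split=> [j|].
    rewrite (tau_sub tau_spec (H_dual UA (Ls_dual j)) (H_cst UA _)) tau_dual //.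
    by rewrite (tau_cst UA tau_spec) subrr.
  by rewrite (tau_sub tau_spec Hf (H_cst UA _)) (tau_cst UA tau_spec) tau_f subrr.
Qed.

Lemma fiber_cluster_set f lam : corona_fiber_condition -> H f ->
  (exists2 tau, fiber H xss tau & tau f = lam) -> cluster_set f xss lam.
Proof.
move=> corona Hf [tau Ftau tau_f]; apply/cluster_setP.
have FF := near_xss_filter f lam.
exists (filter_from near_xss_index (near_xss f lam)); split.
- by apply: filter_from_proper; exact: near_xss_nonempty Ftau tau_f.
- move=> L dL; apply/cvgrPdist_lt => e e0; exists ([:: L], e).
    by split=> [|L']; [exact: e0 | rewrite inE => /eqP ->].
  by move=> b [/(_ L (mem_head _ _))].
- apply/cvgrPdist_lt => e e0; exists ([::], e) => //; last by move=> b [].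
Qed.

End Fibers.

Unset Implicit Arguments.

Theorem mainTheorem4 (R : realType) (X : completeNormedModType R[i])
    (H : (ball1 X -> R[i]) -> Prop) (xss : (X -> R[i]) -> R[i]) :
  uniform_algebra_between H -> in_bidual_ball xss ->
  ((forall f, H f -> forall lam : R[i],
       cluster_set f xss lam <-> exists2 tau, fiber H xss tau & tau f = lam)
   <->
   (forall (n : nat) (fs : 'I_n -> ball1 X -> R[i]) (fn : ball1 X -> R[i]),
       (forall i, AB (fs i)) -> H fn ->
       (exists2 delta : R[i], 0 < delta &
          forall b, delta <= \sum_(i < n) `|fs i b| + `|fn b|) ->
       ~ exists2 tau, fiber H xss tau &
           (forall i, tau (fs i) = 0) /\ tau fn = 0)).
Proof.
move=> UA _; split.
  exact: (@corona_of_cluster_eq _ _ _ UA xss).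
move=> corona f Hf lam; split.
  exact (cluster_set_fiber UA Hf).
exact (fiber_cluster_set UA corona Hf).
Qed.
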